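(* For any matching $\pi$ of size $n$, $\sum_{p=1}^{n-1} m_p(\pi)\le d(\pi)$, and $d(\pi)-\sum_{p=1}^{n-1} m_p(\pi)$ is an even nonnegative integer.
   Context: A matching of size $n$ is a set of $n$ disjoint noncrossing pairs partitioning $\{1,\dots,2n\}$ (no arches $\{i<j\},\{k<l\}$ with $i<k<j<l$). Encode $\pi$ by the increasing sequence $a_1<\dots<a_n$ of the smaller elements of its arches. The Young diagram $Y(\pi)$ has rows (top to bottom) of lengths $a_n-n\ge\dots\ge a_1-1$, and $d(\pi)=\sum_i(a_i-i)$ is its number of boxes. A box in row $x$ from the top and column $y$ from the left is $(x,y)$. Label box $(x,y)$ by $n+1-x-y$. The rim of a nonempty Young diagram is the set of boxes $(x,y)$ with $(x+1,y+1)$ not in the diagram; iteratively removing rims gives the rim decomposition $R_1,\dots,R_s$ of $Y(\pi)$. For each rim $R_\ell$ let $i$ be the label of its bottom-left box (in its leftmost column), $j$ the label of its top-right box (in its topmost row), $k$ its minimal label, and $B_\ell=\{k\}\cup\{i,\dots,k+1\}\cup\{j,\dots,k+1\}$ (multiset). For $1\le p\le n-1$, $m_p(\pi)$ is the multiplicity of $p$ in the multiset union of all $B_\ell$ (equivalently, $m_p(\pi)=\tfrac12(|\mathcal A^L_p|+|\mathcal A^R_p|)$ where, with $\widehat p=2n+1-p$, $\mathcal A^L_p$ is the set of arches $\{b<c\}$ with $b\le p<c<\widehat p$ and $\mathcal A^R_p$ the set of arches with $p<b<\widehat p\le c$). *)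

From mathcomp Require Import all_boot.
Set Implicit Arguments. Unset Strict Implicit. Unset Printing Implicit Defensive.

(* A matching of size n: a list of arches (b, c) with b < c, whose endpoints
   enumerate {1,...,2n} exactly once, and with no two crossing arches. *)
Definition matching (n : nat) (M : seq (nat * nat)) : bool :=
  [&& all (fun e => e.1 < e.2) M,
      perm_eq (flatten [seq [:: e.1; e.2] | e <- M]) (iota 1 (2 * n)) &
      all (fun e => all (fun f => ~~ ((e.1 < f.1) && (f.1 < e.2) && (e.2 < f.2))) M) M].

(* a_1 < ... < a_n : smaller elements of the arches; a_i = nth 0 (aseq M) i.-1 *)
Definition aseq (M : seq (nat * nat)) : seq nat := sort leq (map fst M).

Definition dpi (n : nat) (M : seq (nat * nat)) : nat :=
  \sum_(i < n) (nth 0 (aseq M) i - i.+1).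

(* Diagrams are predicates on boxes (x, y) (row x from top, column y from left). *)
Definition diagram := nat * nat -> bool.

(* Young diagram Y(pi): row x (1 <= x <= n) has length a_{n+1-x} - (n+1-x). *)
Definition Ydiag (n : nat) (M : seq (nat * nat)) : diagram :=
  fun b => [&& 1 <= b.1 <= n, 1 <= b.2 &
               b.2 <= nth 0 (aseq M) (n - b.1) - (n.+1 - b.1)].

Definition rim (D : diagram) : diagram := fun b => D b && ~~ D (b.1.+1, b.2.+1).
Definition strip (D : diagram) : diagram := fun b => D b && ~~ rim D b.

(* all boxes of Y(pi) lie in the grid [1,n] x [1,n] *)
Definition grid (n : nat) : seq (nat * nat) :=
  [seq (x, y) | x <- iota 1 n, y <- iota 1 n].

(* the l-th rim (0-indexed: R_{l+1}) as a list of boxes *)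
Definition rimseq (n : nat) (M : seq (nat * nat)) (l : nat) : seq (nat * nat) :=
  [seq b <- grid n | rim (iter l strip (Ydiag n M)) b].

Definition label (n : nat) (b : nat * nat) : nat := n.+1 - b.1 - b.2.

Definition seqmin (s : seq nat) : nat := foldr minn (head 0 s) s.

(* For a nonempty rim R: i = label of the bottom box of its leftmost column,
   j = label of the rightmost box of its topmost row, k = minimal label. *)
Definition rim_i (n : nat) (R : seq (nat * nat)) : nat :=
  let c := seqmin (map snd R) in
  label n (foldr maxn 0 [seq b.1 | b <- R & b.2 == c], c).
Definition rim_j (n : nat) (R : seq (nat * nat)) : nat :=
  let r := seqmin (map fst R) in
  label n (r, foldr maxn 0 [seq b.2 | b <- R & b.1 == r]).
Definition rim_k (n : nat) (R : seq (nat * nat)) : nat :=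
  seqmin [seq label n b | b <- R].

(* multiplicity of p in B = {k} + {i,...,k+1} + {j,...,k+1} *)
Definition multB (n : nat) (R : seq (nat * nat)) (p : nat) : nat :=
  let i := rim_i n R in let j := rim_j n R in let k := rim_k n R in
  (p == k) + ((k < p) && (p <= i)) + ((k < p) && (p <= j)).

(* m_p(pi): multiplicity of p in the union of the B_l over all (nonempty) rims;
   there are at most n rims. *)
Definition mp (n : nat) (M : seq (nat * nat)) (p : nat) : nat :=
  \sum_(l < n | rimseq n M l != [::]) multB n (rimseq n M l) p.

From mathcomp Require Import all_boot zify.

(* Y(pi) is given by its row lengths nu 1 >= nu 2 >= ..., and it fits in the
   staircase x + y <= n because a_i <= 2i - 1 (only i - 1 arches open before
   a_i).  Removing the rim of such a diagram moves every row one step along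
   the diagonal, nu x |-> nu (x + 1) - 1, so d(pi) is the total number of boxes
   of the rims R_1, ..., R_s.  A rim with r rows and first row of length c has
   c + r - 1 boxes, i = n - r, j = n - c and k = n + 1 - (x + y) for a box
   (x, y) of the rim of minimal label, so |R| - |B| = 2 (c + r - x - y) >= 0.
   Summing over the rims gives the claim. *)

Set Implicit Arguments.
Unset Strict Implicit.
Unset Printing Implicit Defensive.

Lemma count_sum_nat (T : Type) (a : pred T) (s : seq T) :
  count a s = \sum_(x <- s) a x.
Proof. by rewrite -sum1_count big_mkcond; apply: eq_bigr => x _; case: (a x). Qed.

Lemma sum_nat_itv (l m a b : nat) : l <= a ->
  \sum_(l <= p < m) ((a <= p) && (p <= b)) = minn m b.+1 - a.
Proof.
move=> la; elim: m => [|m IH]; first by rewrite big_geq //; lia.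
have [lm | ml] := leqP l m; last by rewrite big_geq //; lia.
by rewrite big_nat_recr //= IH; lia.
Qed.

Lemma sum_even_gap (I : Type) (r : seq I) (P : pred I) (F G : I -> nat) :
  (forall i, P i -> F i <= G i /\ ~~ odd (G i - F i)) ->
  \sum_(i <- r | P i) F i <= \sum_(i <- r | P i) G i /\
  ~~ odd (\sum_(i <- r | P i) G i - \sum_(i <- r | P i) F i).
Proof.
apply: (big_ind2 (fun a b => a <= b /\ ~~ odd (b - a))) => // a b c d [ab eab] [cd ecd].
split; first exact: leq_add.
have -> : b + d - (a + c) = (b - a) + (d - c) by lia.
by rewrite oddD (negbTE eab) (negbTE ecd).
Qed.

Lemma seqmin_le (s : seq nat) x : x \in s -> seqmin s <= x.
Proof.
rewrite /seqmin; elim: s (head 0 s) => [//|y s IH] h /=.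
by rewrite in_cons geq_min => /orP [/eqP ->|/IH ->]; rewrite ?leqnn ?orbT.
Qed.

Lemma foldr_minn_mem (s : seq nat) h : foldr minn h s \in h :: s.
Proof.
elim: s => [|y s IH]; first exact: mem_head.
rewrite (_ : foldr minn h (y :: s) = minn y (foldr minn h s)) // !in_cons in IH *.
case: (leqP y (foldr minn h s)) => _; first by rewrite eqxx orbT.
by case/orP: IH => ->; rewrite ?orbT.
Qed.

Lemma seqmin_mem (s : seq nat) : s != [::] -> seqmin s \in s.
Proof.
case: s => [//|y s] _; have := foldr_minn_mem (y :: s) y.
by rewrite in_cons /seqmin /= => /orP [/eqP ->|//]; rewrite mem_head.
Qed.

Lemma seqmin_eq (s : seq nat) v :
  v \in s -> (forall x, x \in s -> v <= x) -> seqmin s = v.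
Proof.
move=> vs vle; apply/eqP; rewrite eqn_leq seqmin_le // vle // seqmin_mem //.
by apply: contraTneq vs => ->.
Qed.

Lemma foldr_maxn_eq (s : seq nat) v :
  v \in s -> (forall x, x \in s -> x <= v) -> foldr maxn 0 s = v.
Proof.
move=> vs svle; rewrite foldrE; apply/eqP; rewrite eqn_leq.
by rewrite (leq_bigmax_seq v vs) // andbT; apply/bigmax_leqP_seq => x xs _; apply: svle.
Qed.

Lemma mem_grid (n : nat) (b : nat * nat) :
  (b \in grid n) = (0 < b.1 <= n) && (0 < b.2 <= n).
Proof.
case: b => x y; apply/allpairsP/idP => [[[x' y'] [/= + + [-> ->]]]|/= xy].
  by rewrite !mem_iota; lia.
by exists (x, y); rewrite /= !mem_iota; split => //; lia.
Qed.

Lemma count_grid (n : nat) (P : pred (nat * nat)) :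
  count P (grid n) = \sum_(1 <= x < n.+1) \sum_(1 <= y < n.+1) P (x, y).
Proof.
rewrite /grid count_flatten sumnE !big_map /index_iota subSS subn0.
by apply: eq_bigr => x _; rewrite count_map count_sum_nat.
Qed.

Lemma sum_multB (n : nat) (R : seq (nat * nat)) :
  0 < rim_k n R < n -> rim_i n R < n -> rim_j n R < n ->
  \sum_(1 <= p < n) multB n R p = 1 + (rim_i n R - rim_k n R) + (rim_j n R - rim_k n R).
Proof.
rewrite /multB; set i := rim_i n R; set j := rim_j n R; set k := rim_k n R.
move=> /andP [k0 kn] i_n j_n; rewrite !big_split /=.
rewrite (eq_bigr (fun p => nat_of_bool ((k <= p) && (p <= k)))) => [|p _].
  by rewrite !sum_nat_itv //; lia.
by rewrite eqn_leq andbC.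
Qed.

Definition rowdiag (nu : nat -> nat) : diagram :=
  fun b => [&& 0 < b.1, 0 < b.2 & b.2 <= nu b.1].

Lemma rim_ext (D D' : diagram) : D =1 D' -> rim D =1 rim D'.
Proof. by move=> DD' b; rewrite /rim !DD'. Qed.

Lemma strip_ext (D D' : diagram) : D =1 D' -> strip D =1 strip D'.
Proof. by move=> DD' b; rewrite /strip /rim !DD'. Qed.

Lemma strip_rowdiag (nu : nat -> nat) :
  (forall x, 0 < x -> nu x.+1 <= nu x) ->
  strip (rowdiag nu) =1 rowdiag (fun x => nu x.+1 - 1).
Proof.
move=> nu_dec [[|x] y]; rewrite /strip /rim /rowdiag //=.
by have := nu_dec x.+1 isT; lia.
Qed.

Lemma iter_strip_rowdiag (D : diagram) (nu : nat -> nat) (l : nat) :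
  (forall x, 0 < x -> nu x.+1 <= nu x) -> D =1 rowdiag nu ->
  iter l strip D =1 rowdiag (fun x => nu (x + l) - l).
Proof.
move=> nu_dec Dnu; elim: l => [|l IH] b /=.
  by rewrite Dnu /rowdiag addn0 subn0.
rewrite (strip_ext IH) strip_rowdiag => [|x x0].
  by rewrite /rowdiag /= addSnnS -subnDA addn1.
by have := nu_dec (x + l); rewrite addSn; lia.
Qed.

Lemma count_rim_strip (D : diagram) (s : seq (nat * nat)) (m : nat) :
  count D s = \sum_(l < m) count (rim (iter l strip D)) s + count (iter m strip D) s.
Proof.
elim: m => [|m IH]; first by rewrite big_ord0.
rewrite big_ord_recr /= IH -addnA; congr (_ + _).
rewrite !count_sum_nat -big_split; apply: eq_bigr => b _ /=.
by rewrite /strip /rim; case: (iter m strip D b); case: (iter m strip D _).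
Qed.

(* Row lengths of a diagram whose rows are numbered from 1 (the value nu 0 plays
   no role) and whose boxes (x, y) all satisfy x + y <= n. *)
Record staircase_rows (n : nat) (nu : nat -> nat) : Prop := StaircaseRows {
  rows_nonincr : forall x, 0 < x -> nu x.+1 <= nu x;
  rows_in_staircase : forall x, 0 < x -> 0 < nu x -> x + nu x <= n }.

Lemma staircase_rows_shift (n : nat) (nu : nat -> nat) (l : nat) :
  staircase_rows n nu -> staircase_rows n (fun x => nu (x + l) - l).
Proof.
case=> nu_dec nu_stair; split => x x0.
  by have := nu_dec (x + l); rewrite addSn; lia.
by have := nu_stair (x + l); lia.
Qed.

Section StaircaseRows.
Variables (n : nat) (nu : nat -> nat).
Hypothesis rows : staircase_rows n nu.

Lemma rows_antimono x y : 0 < x -> x <= y -> nu y <= nu x.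
Proof.
move=> x0; elim: y => [|y IH]; first by rewrite leqn0 => /eqP y0; rewrite y0 in x0.
rewrite leq_eqVlt => /orP [/eqP <- //|xy].
have y0 : 0 < y by lia.
exact: leq_trans (rows_nonincr rows y0) (IH xy).
Qed.

Lemma rows_le_n x : 0 < x -> nu x <= n.
Proof.
move=> x0; case: (posnP (nu x)) => [-> // | nu_x].
by have := rows_in_staircase rows x0 nu_x; lia.
Qed.

Lemma rowdiag_first_row b : rowdiag nu b -> 0 < nu 1.
Proof.
case/and3P => x0 y0 y_le.
exact: leq_trans y0 (leq_trans y_le (@rows_antimono 1 _ isT x0)).
Qed.

Lemma rowdiag_grid b : rowdiag nu b -> b \in grid n.
Proof.
case/and3P => x0 y0 y_le; rewrite mem_grid x0 y0 /=.
by have := rows_in_staircase rows x0 (leq_trans y0 y_le); lia.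
Qed.

Lemma count_rowdiag : count (rowdiag nu) (grid n) = \sum_(1 <= x < n.+1) nu x.
Proof.
rewrite count_grid; apply: eq_big_nat => x /andP [x0 _].
rewrite (eq_bigr (fun y => nat_of_bool ((0 < y) && (y <= nu x)))) => [|y _].
  by rewrite sum_nat_itv //; have := rows_le_n x0; lia.
by rewrite /rowdiag /= x0.
Qed.

Lemma sum_rows_telescope m :
  \sum_(1 <= x < m.+1) (nu x - nu x.+1) = nu 1 - nu m.+1.
Proof.
rewrite (telescope_big (fun i j => nu i - nu j)) => [|k /andP [k1 _] /=].
  by case: m => [|m]; rewrite ?subnn.
have := rows_nonincr rows (ltnW k1); have := @rows_antimono 1 k isT (ltnW k1); lia.
Qed.

Lemma exists_last_row :
  0 < nu 1 -> exists2 r, 0 < r & forall x, 0 < x -> (0 < nu x) = (x <= r).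
Proof.
move=> nu1; have ex_row : exists x, (0 < x) && (0 < nu x) by exists 1; rewrite nu1.
have row_le_n x : (0 < x) && (0 < nu x) -> x <= n.
  by case/andP => x0 /(rows_in_staircase rows x0); lia.
case: (ex_maxnP ex_row row_le_n) => r /andP [r0 nur] r_max; exists r => // x x0.
apply/idP/idP => [nux | xr]; first by apply: r_max; rewrite x0.
exact: leq_trans nur (rows_antimono x0 xr).
Qed.

Section Rim.
Variable r : nat.
Hypotheses (r_pos : 0 < r) (nonempty_rows : forall x, 0 < x -> (0 < nu x) = (x <= r)).

Let R := [seq b <- grid n | rim (rowdiag nu) b].

Lemma first_row_pos : 0 < nu 1.
Proof. by rewrite nonempty_rows. Qed.

Lemma last_row_lt_n : r < n.
Proof.
have := rows_in_staircase rows r_pos; rewrite nonempty_rows // leqnn.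
by move=> /(_ isT); have := nonempty_rows r_pos; lia.
Qed.

Lemma mem_rim_rowdiag b :
  (b \in R) = [&& 0 < b.1, 0 < b.2, b.2 <= nu b.1 & nu b.1.+1 <= b.2].
Proof.
rewrite mem_filter /rim; case Db: (rowdiag nu b) => /=; first rewrite rowdiag_grid // andbT.
all: by move: Db; case: b => x y; rewrite /rowdiag /=; lia.
Qed.

Lemma rim_row_size x : 0 < x ->
  \sum_(1 <= y < n.+1) rim (rowdiag nu) (x, y) = nu x - nu x.+1 + (x < r).
Proof.
move=> x0; rewrite (eq_bigr (fun y => nat_of_bool ((maxn 1 (nu x.+1) <= y) && (y <= nu x)))).
  rewrite sum_nat_itv ?leq_maxl //.
  have := rows_le_n x0; have := rows_nonincr rows x0.
  by have := nonempty_rows x0; have := nonempty_rows (ltn0Sn x); lia.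
by move=> y _; rewrite /rim /rowdiag /= x0; lia.
Qed.

Lemma size_rim_rowdiag : size R = nu 1 + r - 1.
Proof.
rewrite size_filter count_grid.
rewrite (eq_big_nat _ _ (F2 := fun x => nu x - nu x.+1 + ((1 <= x) && (x <= r.-1)))).
  rewrite big_split /= sum_rows_telescope sum_nat_itv //.
  by have := nonempty_rows (ltn0Sn n); have := last_row_lt_n; lia.
by move=> x /andP [x0 _]; rewrite rim_row_size //; lia.
Qed.

Lemma last_row_box : (r, 1) \in R.
Proof.
rewrite mem_rim_rowdiag /= r_pos.
by have := nonempty_rows r_pos; have := nonempty_rows (ltn0Sn r); lia.
Qed.

Lemma first_row_box : (1, nu 1) \in R.
Proof. by rewrite mem_rim_rowdiag /= first_row_pos leqnn (rows_nonincr rows (ltn0Sn 0)). Qed.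

Lemma rim_i_rowdiag : rim_i n R = n - r.
Proof.
have min_col : seqmin [seq b.2 | b <- R] = 1.
  apply: seqmin_eq => [|y /mapP [b + ->]]; first exact: (map_f _ last_row_box).
  by rewrite mem_rim_rowdiag => /and4P [].
have max_row : foldr maxn 0 [seq b.1 | b <- R & b.2 == 1] = r.
  apply: foldr_maxn_eq => [|x /mapP [b]].
    by apply/mapP; exists (r, 1); rewrite // mem_filter last_row_box.
  rewrite mem_filter mem_rim_rowdiag => /andP [/eqP b2] /and4P [b1 _ + _] ->.
  by rewrite b2 -nonempty_rows.
by rewrite /rim_i min_col max_row /label /=; lia.
Qed.

Lemma rim_j_rowdiag : rim_j n R = n - nu 1.
Proof.
have min_row : seqmin [seq b.1 | b <- R] = 1.
  apply: seqmin_eq => [|x /mapP [b + ->]]; first exact: (map_f _ first_row_box).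
  by rewrite mem_rim_rowdiag => /and4P [].
have max_col : foldr maxn 0 [seq b.2 | b <- R & b.1 == 1] = nu 1.
  apply: foldr_maxn_eq => [|y /mapP [b]].
    by apply/mapP; exists (1, nu 1); rewrite // mem_filter first_row_box.
  by rewrite mem_filter mem_rim_rowdiag => /andP [/eqP b1] /and4P [_ _ + _] ->; rewrite b1.
by rewrite /rim_j min_row max_col /label /=; lia.
Qed.

Lemma rim_k_attained : exists2 b, b \in R & rim_k n R = label n b.
Proof.
apply/mapP/seqmin_mem; rewrite -size_eq0 size_map size_eq0.
by apply: contraTneq last_row_box => ->.
Qed.

Lemma rim_even_gap :
  \sum_(1 <= p < n) multB n R p <= size R /\
  ~~ odd (size R - \sum_(1 <= p < n) multB n R p).
Proof.
have k_le b : b \in R -> rim_k n R <= label n b by move=> bR; apply/seqmin_le/map_f.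
have [[x y] xyR kE] := rim_k_attained.
have := k_le _ last_row_box; have := k_le _ first_row_box; rewrite kE /label /=.
move: xyR; rewrite mem_rim_rowdiag /= => /and4P [x0 y0 y_le _] k_le_j k_le_i.
have x_le_r : x <= r by rewrite -nonempty_rows // (leq_trans y0 y_le).
have x_stair := rows_in_staircase rows x0 (leq_trans y0 y_le).
have nu_x_le := @rows_antimono 1 x isT x0.
have c_pos := first_row_pos; have r_lt_n := last_row_lt_n.
have i_lt_n : rim_i n R < n by rewrite rim_i_rowdiag; lia.
have j_lt_n : rim_j n R < n by rewrite rim_j_rowdiag; lia.
have k_bounds : 0 < rim_k n R < n by rewrite kE /label /=; lia.
rewrite sum_multB // rim_i_rowdiag rim_j_rowdiag kE size_rim_rowdiag /label /=.
have -> : nu 1 + r - 1 - (1 + (n - r - (n.+1 - x - y)) + (n - nu 1 - (n.+1 - x - y)))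
  = (nu 1 + r - x - y).*2 by lia.
by split; [lia | rewrite odd_double].
Qed.

End Rim.
End StaircaseRows.

Lemma subseq_fst_endpoints (M : seq (nat * nat)) :
  subseq (map fst M) (flatten [seq [:: e.1; e.2] | e <- M]).
Proof. by elim: M => //= e M IH; rewrite eqxx; apply: subseq_trans IH (subseq_cons _ _). Qed.

Lemma size_endpoints (M : seq (nat * nat)) :
  size (flatten [seq [:: e.1; e.2] | e <- M]) = (size M).*2.
Proof. by elim: M => //= e M ->; rewrite doubleS. Qed.

Lemma count_endpoints_lt (M : seq (nat * nat)) t : all (fun e => e.1 < e.2) M ->
  count (fun x => x < t) (flatten [seq [:: e.1; e.2] | e <- M])
    <= (count (fun e => e.1 < t) M).*2.
Proof.
elim: M => //= e M IH /andP [e12 /IH]; rewrite doubleD.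
by case: (ltnP e.1 t); case: (ltnP e.2 t) => /=; lia.
Qed.

Lemma count_iota_ltn t N : count (fun x => x < t) (iota 1 N) = minn t.-1 N.
Proof.
have -> : iota 1 N = index_iota 1 N.+1 by rewrite /index_iota subn1.
rewrite count_sum_nat (eq_big_nat _ _ (F2 := fun x => nat_of_bool ((1 <= x) && (x <= t.-1)))).
  by rewrite sum_nat_itv //; lia.
by move=> x /andP [x0 _]; rewrite x0; lia.
Qed.

Definition rowlen (n : nat) (M : seq (nat * nat)) (x : nat) : nat :=
  if x <= n then nth 0 (aseq M) (n - x) - (n.+1 - x) else 0.

Lemma Ydiag_rowdiag (n : nat) (M : seq (nat * nat)) : Ydiag n M =1 rowdiag (rowlen n M).
Proof. by case=> x y; rewrite /Ydiag /rowdiag /rowlen /=; case: (leqP x n); lia. Qed.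

Lemma dpi_rowlen (n : nat) (M : seq (nat * nat)) :
  dpi n M = \sum_(1 <= x < n.+1) rowlen n M x.
Proof.
rewrite /dpi -(big_mkord xpredT (fun i => nth 0 (aseq M) i - i.+1)) big_nat_rev big_add1.
by apply: eq_big_nat => x /andP [_ xn]; rewrite /rowlen xn add0n; congr (_ - _); lia.
Qed.

Section Matching.
Variables (n : nat) (M : seq (nat * nat)).
Hypothesis HM : matching n M.

Lemma size_matching : size M = n.
Proof. by case/and3P: HM => _ /perm_size; rewrite size_endpoints size_iota; lia. Qed.

Lemma size_aseq : size (aseq M) = n.
Proof. by rewrite size_sort size_map size_matching. Qed.

Lemma sorted_aseq : sorted ltn (aseq M).
Proof.
rewrite ltn_sorted_uniq_leq sort_sorted ?andbT; last exact: leq_total.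
rewrite sort_uniq (subseq_uniq (subseq_fst_endpoints M)) //.
by case/and3P: HM => _ /perm_uniq ->; rewrite iota_uniq.
Qed.

Lemma nth_aseq_ltn i j : i < j < n -> nth 0 (aseq M) i < nth 0 (aseq M) j.
Proof.
case/andP => ij jn; apply: (sorted_ltn_nth ltn_trans) => //; first exact: sorted_aseq.
all: by rewrite inE size_aseq; lia.
Qed.

Lemma nth_aseq_leq i j : i <= j < n -> nth 0 (aseq M) i <= nth 0 (aseq M) j.
Proof.
case/andP; rewrite leq_eqVlt => /orP [/eqP -> //|ij jn].
by apply/ltnW/nth_aseq_ltn; rewrite ij.
Qed.

(* The numbers 1, ..., t - 1 below t = a_(i+1) are endpoints of arches opening
   below t, and at most i arches do so. *)
Lemma nth_aseq_bound i : i < n -> nth 0 (aseq M) i <= i.*2.+1.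
Proof.
move=> i_lt; set t := nth 0 (aseq M) i.
have below_t : count (fun x => x < t) (aseq M) <= i.
  rewrite -(cat_take_drop i (aseq M)) count_cat.
  have -> : count (fun x => x < t) (drop i (aseq M)) = 0.
    apply/eqP; rewrite -leqn0 leqNgt -has_count; apply/hasPn => y /(nthP 0) [j].
    rewrite size_drop size_aseq nth_drop -leqNgt => j_lt <-.
    by apply: nth_aseq_leq; lia.
  by rewrite addn0 (leq_trans (count_size _ _)) // size_take size_aseq i_lt.
have : count (fun x => x < t) (iota 1 (2 * n)) <= i.*2.
  case/and3P: HM => arches /permP <- _.
  apply: leq_trans (count_endpoints_lt t arches) _; rewrite leq_double.
  have aseq_perm : perm_eq (aseq M) (map fst M) by rewrite /aseq perm_sort.
  by rewrite -(count_map fst (fun x => x < t)) -(permP aseq_perm).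
by rewrite count_iota_ltn; lia.
Qed.

Lemma staircase_rowlen : staircase_rows n (rowlen n M).
Proof.
split => x x0; rewrite /rowlen.
  case: (leqP x.+1 n) => [xn|]; last by [].
  by rewrite (ltnW xn); have := @nth_aseq_ltn (n - x.+1) (n - x); lia.
case: (leqP x n) => // xn _; have := @nth_aseq_bound (n - x); lia.
Qed.

Let strip_Ydiag l :
  iter l strip (Ydiag n M) =1 rowdiag (fun x => rowlen n M (x + l) - l).
Proof. exact: iter_strip_rowdiag l (rows_nonincr staircase_rowlen) (Ydiag_rowdiag n M). Qed.

Lemma dpi_sum_rims : dpi n M = \sum_(l < n | rimseq n M l != [::]) size (rimseq n M l).
Proof.
rewrite dpi_rowlen -(count_rowdiag staircase_rowlen) -(eq_count (Ydiag_rowdiag n M)).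
rewrite (count_rim_strip _ _ n).
have -> : count (iter n strip (Ydiag n M)) (grid n) = 0.
  apply/eqP; rewrite -leqn0 leqNgt -has_count; apply/hasPn => [[x y]] _.
  by rewrite strip_Ydiag /rowdiag /rowlen /=; case: (leqP (x + n) n); lia.
rewrite addn0 [RHS]big_mkcond; apply: eq_bigr => l _; rewrite /rimseq.
case: eqP => [nil|_]; last by rewrite size_filter.
by rewrite -size_filter nil.
Qed.

Lemma rimseq_even_gap l : rimseq n M l != [::] ->
  \sum_(1 <= p < n) multB n (rimseq n M l) p <= size (rimseq n M l) /\
  ~~ odd (size (rimseq n M l) - \sum_(1 <= p < n) multB n (rimseq n M l) p).
Proof.
have -> : rimseq n M l = [seq b <- grid n | rim (rowdiag (fun x => rowlen n M (x + l) - l)) b].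
  exact/eq_filter/rim_ext/strip_Ydiag.
have rows := staircase_rows_shift l staircase_rowlen.
set R := [seq b <- grid n | _] => R_ne.
have /hasP [b + _] : has predT R by rewrite has_predT lt0n size_eq0.
rewrite mem_filter => /andP [/andP [/(rowdiag_first_row rows) nu1 _] _].
have [r r_pos nonempty_rows] := exists_last_row rows nu1.
exact: rim_even_gap nonempty_rows.
Qed.

End Matching.

Theorem proposition3p3 (n : nat) (M : seq (nat * nat)) :
  matching n M ->
  \sum_(1 <= p < n) mp n M p <= dpi n M /\
  ~~ odd (dpi n M - \sum_(1 <= p < n) mp n M p).
Proof.
move=> HM; rewrite (dpi_sum_rims HM) /mp exchange_big /=.
by apply: sum_even_gap => l; apply: rimseq_even_gap.
Qed.
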